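(* Let $H\in\mathbb{H}^{n\times n}$ be an invertible Hermitian quaternion matrix and let $X\in\mathbb{H}^{n\times n}$. Then $X$ admits an $H$-polar decomposition $X=UA$, with $U$ $H$-unitary and $A$ $H$-selfadjoint, if and only if there exists an $H$-selfadjoint matrix $A\in\mathbb{H}^{n\times n}$ with $A^2=X^{[*]}X$ and $\mathrm{Ker}\,X=\mathrm{Ker}\,A$.
   Context: $\mathbb{H}$ denotes the real quaternions, $\mathbb{H}^n$ is a right vector space, and $A^*$ is the conjugate transpose. The indefinite inner product is $[x,y]=y^*Hx$. The $H$-adjoint of $X$ is $X^{[*]}=H^{-1}X^*H$. A matrix $A$ is $H$-selfadjoint if $A^{[*]}=A$; a matrix $U$ is $H$-unitary if $U^*HU=H$. An $H$-polar decomposition of $X$ is a factorization $X=UA$ with $U$ $H$-unitary and $A$ $H$-selfadjoint. *)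

From HB Require Import structures.
From mathcomp Require Import all_boot all_order all_algebra.
From mathcomp Require Import reals.
From Stdlib Require Import ClassicalEpsilon.
From mathcomp Require Import ring.
Set Implicit Arguments. Unset Strict Implicit. Unset Printing Implicit Defensive.
Import Order.TTheory GRing.Theory Num.Theory.
Local Open Scope ring_scope.

Section Quaternions.
Variable R : realType.

Record quat := Quat { qre : R; qi : R; qj : R; qk : R }.

Definition quat_code (q : quat) : R * R * R * R := (qre q, qi q, qj q, qk q).
Definition quat_decode (c : R * R * R * R) : quat :=
  let: (a, b, c, d) := c in Quat a b c d.
Lemma quat_codeK : cancel quat_code quat_decode. Proof. by case. Qed.

HB.instance Definition _ := Choice.copy quat (can_type quat_codeK).

Definition qzero := Quat 0 0 0 0.
Definition qone := Quat 1 0 0 0.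
Definition qadd (p q : quat) :=
  Quat (qre p + qre q) (qi p + qi q) (qj p + qj q) (qk p + qk q).
Definition qopp (p : quat) := Quat (- qre p) (- qi p) (- qj p) (- qk p).
(* Hamilton product: i^2 = j^2 = k^2 = ijk = -1 *)
Definition qmul (p q : quat) :=
  Quat (qre p * qre q - qi p * qi q - qj p * qj q - qk p * qk q)
       (qre p * qi q + qi p * qre q + qj p * qk q - qk p * qj q)
       (qre p * qj q - qi p * qk q + qj p * qre q + qk p * qi q)
       (qre p * qk q + qi p * qj q - qj p * qi q + qk p * qre q).
Definition qconj (p : quat) := Quat (qre p) (- qi p) (- qj p) (- qk p).

Lemma qaddA : associative qadd.
Proof. by case=> ????[????][????]; rewrite /qadd /= !addrA. Qed.
Lemma qaddC : commutative qadd.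
Proof. by case=> ????[????]; rewrite /qadd /=; congr Quat; apply: addrC. Qed.
Lemma qadd0 : left_id qzero qadd.
Proof. by case=> ????; rewrite /qadd /= !add0r. Qed.
Lemma qaddN : left_inverse qzero qopp qadd.
Proof. by case=> ????; rewrite /qadd /= !addNr. Qed.

HB.instance Definition _ := GRing.isZmodule.Build quat qaddA qaddC qadd0 qaddN.

Lemma qmulA : associative qmul.
Proof. by case=> ????[????][????]; rewrite /qmul /=; congr Quat; ring. Qed.
Lemma qmul1 : left_id qone qmul.
Proof. by case=> ????; rewrite /qmul /=; congr Quat; ring. Qed.
Lemma qmulr1 : right_id qone qmul.
Proof. by case=> ????; rewrite /qmul /=; congr Quat; ring. Qed.
Lemma qmulDl : left_distributive qmul +%R.
Proof.
move=> p q r; change (qmul (qadd p q) r = qadd (qmul p r) (qmul q r)).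
by case: p q r => ????[????][????]; rewrite /qmul /qadd /=; congr Quat; ring.
Qed.
Lemma qmulDr : right_distributive qmul +%R.
Proof.
move=> p q r; change (qmul p (qadd q r) = qadd (qmul p q) (qmul p r)).
by case: p q r => ????[????][????]; rewrite /qmul /qadd /=; congr Quat; ring.
Qed.
Lemma qone_neq0 : qone != 0.
Proof. apply/eqP=> /(congr1 qre) /= /eqP; by rewrite oner_eq0. Qed.

HB.instance Definition _ :=
  GRing.Zmodule_isNzRing.Build quat qmulA qmul1 qmulr1 qmulDl qmulDr qone_neq0.

End Quaternions.

Section QuatMatrices.
Variable R : realType.
Local Notation H := (quat R).

Definition qadjmx m n (A : 'M[H]_(m, n)) : 'M[H]_(n, m) :=
  \matrix_(i, j) qconj (A j i).

Definition qinvertible n (A : 'M[H]_n) : Prop :=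
  exists B : 'M[H]_n, A *m B = 1%:M /\ B *m A = 1%:M.

(* the inverse of an invertible matrix (arbitrary otherwise) *)
Definition qinvmx n (A : 'M[H]_n) : 'M[H]_n :=
  epsilon (inhabits 0) (fun B => A *m B = 1%:M /\ B *m A = 1%:M).

Definition qhermitian n (A : 'M[H]_n) : Prop := qadjmx A = A.

Definition Hadj n (Hm X : 'M[H]_n) : 'M[H]_n := qinvmx Hm *m qadjmx X *m Hm.

Definition Hselfadjoint n (Hm A : 'M[H]_n) : Prop := Hadj Hm A = A.

Definition Hunitary n (Hm U : 'M[H]_n) : Prop := qadjmx U *m Hm *m U = Hm.

Definition Hpolar_decomposition n (Hm X U A : 'M[H]_n) : Prop :=
  [/\ Hunitary Hm U, Hselfadjoint Hm A & X = U *m A].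

Definition qker n (X : 'M[H]_n) : 'cV[H]_n -> Prop := fun x => X *m x = 0.

End QuatMatrices.

(* If X = U A, then X^[*] X = A^[*] U^[*] U A = A^2, and Ker X = Ker A because U
   is invertible.  Conversely, A^2 = X^[*] X says that the columns of A and of X
   have the same Gram matrix for the form [x, y] = y^* H x, and Ker A = Ker X says
   that they satisfy the same linear relations; by Witt's theorem for Hermitian
   forms over the quaternions, the partial isometry A e_i |-> X e_i then extends
   to an H-unitary U, i.e. X = U A.
   Witt's theorem is proved one column at a time.  A vector x outside the span of
   the previous columns W is sent to y (same products with W, same norm) by the
   transvection 1 - d [d, x]^-1 d^* H with d = x - y, which fixes the H-orthogonal
   complement of d; this fails only when [x - y, x] = 0, and then one goes through
   an intermediate vector x + u a, with u H-orthogonal to W. *)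

From HB Require Import structures.
From mathcomp Require Import all_boot all_order all_algebra.
From mathcomp Require Import reals ring.
From Stdlib Require Import Classical ClassicalEpsilon.
Set Implicit Arguments. Unset Strict Implicit. Unset Printing Implicit Defensive.
Import GRing.Theory Num.Theory.
Local Open Scope ring_scope.

Section QuaternionDivisionRing.
Variable R : realType.
Implicit Types p q : quat R.

Lemma qconjB : {morph @qconj R : p q / p - q}.
Proof.
move=> p q; change (qconj (qadd p (qopp q)) = qadd (qconj p) (qopp (qconj q))).
by case: p q => ????[????]; rewrite /qconj /qadd /qopp /=; congr Quat; ring.
Qed.

HB.instance Definition _ := GRing.isZmodMorphism.Build _ _ (@qconj R) qconjB.

Lemma qconjM p q : qconj (p * q) = qconj q * qconj p.
Proof.
change (qconj (qmul p q) = qmul (qconj q) (qconj p)).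
by case: p q => ????[????]; rewrite /qconj /qmul /=; congr Quat; ring.
Qed.

Lemma qconjK : involutive (@qconj R).
Proof. by case=> ????; rewrite /qconj /= !opprK. Qed.

Lemma qconj1 : qconj 1 = 1 :> quat R.
Proof. by rewrite /qconj /= oppr0. Qed.

Definition qnorm2 p := qre p ^+ 2 + qi p ^+ 2 + qj p ^+ 2 + qk p ^+ 2.

Lemma qnorm2_eq0 p : (qnorm2 p == 0) = (p == 0).
Proof.
rewrite -(inj_eq (can_inj (@quat_codeK R))) /= !xpair_eqE.
by rewrite /qnorm2 !paddr_eq0 ?addr_ge0 ?sqr_ge0 // !sqrf_eq0.
Qed.

Definition qinv p :=
  Quat (qre p / qnorm2 p) (- qi p / qnorm2 p) (- qj p / qnorm2 p) (- qk p / qnorm2 p).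

Lemma qmulrV : {in predC1 0, right_inverse 1 qinv *%R}.
Proof.
move=> p; rewrite inE -qnorm2_eq0 => p0; change (qmul p (qinv p) = qone R).
move: p0; case: p => a b c d; rewrite /qnorm2 /qinv /qmul /= => p0.
by congr Quat; rewrite /qnorm2 /=; field.
Qed.

Lemma qmulVr : {in predC1 0, left_inverse 1 qinv *%R}.
Proof.
move=> p; rewrite inE -qnorm2_eq0 => p0; change (qmul (qinv p) p = qone R).
move: p0; case: p => a b c d; rewrite /qnorm2 /qinv /qmul /= => p0.
by congr Quat; rewrite /qnorm2 /=; field.
Qed.

Lemma quat_unitP p q : q * p = 1 /\ p * q = 1 -> p \in predC1 0.
Proof.
case=> qp _; rewrite inE; apply: contra_eq_neq qp => ->.
by rewrite mulr0 eq_sym oner_eq0.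
Qed.

Lemma qinv_out : {in [predC predC1 0], qinv =1 id}.
Proof.
by move=> p; rewrite !inE negbK => /eqP->; rewrite /qinv /= oppr0 !mul0r.
Qed.

HB.instance Definition _ :=
  GRing.NzRing_hasMulInverse.Build (quat R) qmulVr qmulrV quat_unitP qinv_out.

Lemma quat_unitE p : (p \is a GRing.unit) = (p != 0).
Proof. by []. Qed.

End QuaternionDivisionRing.

Section DivisionRingMatrices.
Variable D : unitRingType.
Hypothesis unitD : forall x : D, (x \is a GRing.unit) = (x != 0).
Implicit Types M : 'M[D]_1.

Lemma mx11_eq0 M : (M == 0) = (M 0 0 == 0).
Proof.
apply/eqP/eqP => [-> | M00]; first by rewrite mxE.
by rewrite [M]mx11_scalar M00 raddf0.
Qed.

Definition inv11 M : 'M[D]_1 := ((M 0 0)^-1)%:M.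

Lemma mulmx_inv11 M : M != 0 -> M *m inv11 M = 1%:M.
Proof.
rewrite mx11_eq0 -unitD => M00.
by rewrite [M in M *m _]mx11_scalar -scalar_mxM mulrV.
Qed.

Lemma mul_inv11mx M : M != 0 -> inv11 M *m M = 1%:M.
Proof.
rewrite mx11_eq0 -unitD => M00.
by rewrite [M in _ *m M]mx11_scalar -scalar_mxM mulVr.
Qed.

Lemma inv11_neq0 M : M != 0 -> inv11 M != 0.
Proof.
move=> M0; apply: contra_neq (oner_neq0 D) => M'0.
by have /matrixP/(_ 0 0) := mulmx_inv11 M0; rewrite M'0 mulmx0 !mxE.
Qed.

Lemma mul11mx_neq0 k M (N : 'M[D]_(1, k)) : M != 0 -> N != 0 -> M *m N != 0.
Proof.
move=> M0; apply: contra_neq => MN0.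
by rewrite -[N]mul1mx -(mul_inv11mx M0) -mulmxA MN0 mulmx0.
Qed.

Lemma mulmx11_neq0 k (N : 'M[D]_(k, 1)) M : N != 0 -> M != 0 -> N *m M != 0.
Proof.
move=> N0 M0; apply: contra_neq N0 => NM0.
by rewrite -[N]mulmx1 -(mulmx_inv11 M0) mulmxA NM0 mul0mx.
Qed.

Definition in_colspan m k (Q : 'M[D]_(m, k)) (v : 'cV_m) := exists c, Q *m c = v.

Lemma notin_colspan_separated m k (Q : 'M[D]_(m, k)) (v : 'cV_m) :
  ~ in_colspan Q v -> exists r : 'rV_m, r *m Q = 0 /\ r *m v != 0.
Proof.
elim: k Q v => [|k IHk] Q v Qv.
  have v0 : v != 0 by apply/eqP => v0; apply: Qv; exists 0; rewrite v0 mulmx0.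
  have [i vi0] : exists i, v i 0 != 0.
    apply/existsP; apply: contraNT v0 => /existsPn vi0.
    by apply/eqP/matrixP => i j; rewrite (ord1 j) mxE; apply/eqP/negbNE/vi0.
  exists (delta_mx 0 i); rewrite thinmx0 -rowE; split => //.
  by rewrite mx11_eq0 mxE.
move: Q Qv; rewrite -add1n => Q Qv.
set q := lsubmx Q; set Q1 := rsubmx Q.
have defQ : Q = row_mx q Q1 by rewrite hsubmxK.
have Q1v w : ~ in_colspan Q1 (v - q *m w).
  move=> [c Q1c]; apply: Qv; exists (col_mx w c).
  by rewrite defQ mul_row_col Q1c addrC subrK.
have [r1 [r1Q1 r1v]] : exists r : 'rV_m, r *m Q1 = 0 /\ r *m v != 0.
  by apply: IHk; move: (Q1v 0); rewrite mulmx0 subr0.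
have [r1q0 | r1q] := eqVneq (r1 *m q) 0.
  by exists r1; rewrite defQ mul_mx_row r1q0 r1Q1 row_mx0.
(* Separate a corrected v from Q1, then add a multiple of r1 to also kill q. *)
have [r2 [r2Q1 r2v]] := IHk Q1 _ (Q1v (inv11 (r1 *m q) *m (r1 *m v))).
exists (r2 - r2 *m q *m inv11 (r1 *m q) *m r1); split.
  rewrite defQ mul_mx_row !mulmxBl r2Q1 -!mulmxA r1Q1 mul_inv11mx //.
  by rewrite !mulmx0 mulmx1 !subrr row_mx0.
by move: r2v; rewrite mulmxBr !mulmxBl !mulmxA.
Qed.

End DivisionRingMatrices.

Section ConjugateTranspose.
Variable R : realType.
Local Notation H := (quat R).

Lemma qadjmxD m n : {morph @qadjmx R m n : A B / A + B}.
Proof. by move=> A B; apply/matrixP => i j; rewrite !mxE raddfD. Qed.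

Lemma qadjmxN m n : {morph @qadjmx R m n : A / - A}.
Proof. by move=> A; apply/matrixP => i j; rewrite !mxE raddfN. Qed.

Lemma qadjmx0 m n : qadjmx 0 = 0 :> 'M[H]_(n, m).
Proof. by apply/matrixP => i j; rewrite !mxE raddf0. Qed.

Lemma qadjmxK m n (A : 'M[H]_(m, n)) : qadjmx (qadjmx A) = A.
Proof. by apply/matrixP => i j; rewrite !mxE qconjK. Qed.

Lemma qadjmx_eq0 m n (A : 'M[H]_(m, n)) : (qadjmx A == 0) = (A == 0).
Proof.
by apply/eqP/eqP => [A0 | ->]; rewrite ?qadjmx0 // -[A]qadjmxK A0 qadjmx0.
Qed.

Lemma qadjmx_scalar n (a : H) : qadjmx (a%:M : 'M_n) = (qconj a)%:M.
Proof.
apply/matrixP => i j; rewrite !mxE eq_sym.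
by case: (i == j); rewrite ?raddf0.
Qed.

Lemma qadjmx1 n : qadjmx (1%:M : 'M[H]_n) = 1%:M.
Proof. by rewrite qadjmx_scalar qconj1. Qed.

Lemma qadjmxM m n p (A : 'M[H]_(m, n)) (B : 'M_(n, p)) :
  qadjmx (A *m B) = qadjmx B *m qadjmx A.
Proof.
apply/matrixP => i j; rewrite !mxE raddf_sum.
by apply: eq_bigr => k _; rewrite !mxE; apply: qconjM.
Qed.

Lemma qadjmx_row_mx m n1 n2 (A : 'M[H]_(m, n1)) (B : 'M_(m, n2)) :
  qadjmx (row_mx A B) = col_mx (qadjmx A) (qadjmx B).
Proof.
apply/matrixP => i j; rewrite !mxE.
by case: splitP => k _; rewrite !mxE.
Qed.

End ConjugateTranspose.

Section NormPreservingShift.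
Variable R : realType.
Local Notation H := (quat R).
Let unitH := @quat_unitE R.
Implicit Types a b g : 'M[H]_1.

Lemma qadjmx_inv11 b : b != 0 -> qadjmx (inv11 (qadjmx b)) *m b = 1%:M.
Proof.
move=> b0; rewrite -[b in _ *m b]qadjmxK -qadjmxM.
by rewrite (mulmx_inv11 unitH) ?qadjmx_eq0 ?qadjmx1.
Qed.

Lemma two_quat_neq0 : 2 != 0 :> H.
Proof.
apply/eqP => /(congr1 (@qre R)); rewrite mulr2n /= => /eqP.
by rewrite -mulr2n pnatr_eq0.
Qed.

(* With b = u^* H x and g = u^* H u, this says that x + u a has the same
   H-norm as x. *)
Lemma exists_norm_preserving_shift b g : b != 0 -> qadjmx g = g ->
  exists2 a, a != 0 & qadjmx b *m a + qadjmx a *m b + qadjmx a *m g *m a = 0.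
Proof.
move=> b0 g_herm; have b'0 : qadjmx b != 0 by rewrite qadjmx_eq0.
have [-> | g0] := eqVneq g 0.
  pose e : 'M[H]_1 := (Quat 0 1 0 0)%:M.
  have e_skew : qadjmx e = - e.
    rewrite qadjmx_scalar -raddfN; congr _%:M.
    by rewrite /qconj /=; congr Quat; rewrite oppr0.
  have e0 : e != 0.
    rewrite mx11_eq0 mxE /=; apply/eqP => /(congr1 (@qi R)) /= /eqP.
    by rewrite oner_eq0.
  exists (inv11 (qadjmx b) *m e).
    exact: (mul11mx_neq0 unitH (inv11_neq0 unitH b'0) e0).
  rewrite mulmxA (mulmx_inv11 unitH) // mul1mx qadjmxM e_skew mulmx0 mul0mx addr0.
  by rewrite -mulmxA qadjmx_inv11 // mulmx1 subrr.
set G := inv11 g *m b.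
have g'_herm : qadjmx (inv11 g) = inv11 g.
  rewrite -[LHS]mulmx1 -(mulmx_inv11 unitH g0) mulmxA -{2}g_herm -qadjmxM.
  by rewrite (mulmx_inv11 unitH) // qadjmx1 mul1mx.
exists (- (G + G)).
  have -> : G + G = G *m 2%:M by rewrite mulr2n raddfD mulmxDr mulmx1.
  rewrite oppr_eq0 (mulmx11_neq0 unitH) ?(mul11mx_neq0 unitH)
          ?(inv11_neq0 unitH) //.
  by rewrite mx11_eq0 mxE two_quat_neq0.
have GgG : qadjmx G *m g *m G = qadjmx b *m G.
  by rewrite qadjmxM g'_herm -!mulmxA (mulmxA g) (mulmx_inv11 unitH) // mul1mx.
have G'b : qadjmx G *m b = qadjmx b *m G by rewrite qadjmxM g'_herm mulmxA.
rewrite qadjmxN qadjmxD !mulmxN !mulNmx !mulmxDr !mulmxDl G'b GgG.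
by rewrite opprK -opprD addNr.
Qed.

End NormPreservingShift.

Section HermitianForm.
Variables (R : realType) (n : nat) (Hm : 'M[quat R]_n).
Hypothesis Hm_herm : qhermitian Hm.
Local Notation H := (quat R).
Let unitH := @quat_unitE R.
Local Notation "''[' A , B ]" := (qadjmx A *m Hm *m B).

Lemma qadjmx_form m p (A : 'M[H]_(n, m)) (B : 'M_(n, p)) :
  qadjmx '[A, B] = '[B, A].
Proof. by rewrite !qadjmxM Hm_herm qadjmxK mulmxA. Qed.

Lemma formMl m p k (A : 'M[H]_(n, m)) (E : 'M_(m, k)) (B : 'M_(n, p)) :
  '[A *m E, B] = qadjmx E *m '[A, B].
Proof. by rewrite qadjmxM !mulmxA. Qed.

Lemma formMr m p k (A : 'M[H]_(n, m)) (B : 'M_(n, p)) (F : 'M_(p, k)) :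
  '[A, B *m F] = '[A, B] *m F.
Proof. by rewrite mulmxA. Qed.

Lemma formBl m p (A B : 'M[H]_(n, m)) (C : 'M_(n, p)) :
  '[A - B, C] = '[A, C] - '[B, C].
Proof. by rewrite qadjmxD qadjmxN !mulmxDl !mulNmx. Qed.

Lemma formBr m p (A : 'M[H]_(n, m)) (B C : 'M_(n, p)) :
  '[A, B - C] = '[A, B] - '[A, C].
Proof. by rewrite mulmxBr. Qed.

Lemma form_row_mx m1 m2 p1 p2 (A1 : 'M[H]_(n, m1)) (A2 : 'M_(n, m2))
    (B1 : 'M_(n, p1)) (B2 : 'M_(n, p2)) :
  '[row_mx A1 A2, row_mx B1 B2] =
  block_mx '[A1, B1] '[A1, B2] '[A2, B1] '[A2, B2].
Proof. by rewrite qadjmx_row_mx mul_col_mx mul_col_row. Qed.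

Lemma Hunitary1 : Hunitary Hm 1%:M.
Proof. by rewrite /Hunitary qadjmx1 mul1mx mulmx1. Qed.

Lemma Hunitary_form U m p (A : 'M[H]_(n, m)) (B : 'M_(n, p)) :
  Hunitary Hm U -> '[U *m A, U *m B] = '[A, B].
Proof. by move=> HU; rewrite formMl formMr HU mulmxA. Qed.

Lemma HunitaryM U V : Hunitary Hm U -> Hunitary Hm V -> Hunitary Hm (U *m V).
Proof. by move=> HU HV; rewrite /Hunitary Hunitary_form. Qed.

Lemma transvection (d x : 'cV[H]_n) :
  '[d, x] != 0 -> '[d, d] = '[d, x] + qadjmx '[d, x] ->
  exists s, [/\ Hunitary Hm s, s *m x = x - d &
    forall k (w : 'M_(n, k)), '[d, w] = 0 -> s *m w = w].
Proof.
move=> T0 ddT; set T := '[d, x]; set S := inv11 T; set K := qadjmx d *m Hm.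
have TS : T *m S = 1%:M by apply: (mulmx_inv11 unitH).
have ST : S *m T = 1%:M by apply: (mul_inv11mx unitH).
(* This identity makes the cross terms of s^* H s cancel. *)
have SddS : qadjmx S *m '[d, d] *m S = qadjmx S + S.
  rewrite ddT mulmxDr mulmxDl -mulmxA TS -qadjmxM TS qadjmx1.
  by rewrite mulmx1 mul1mx addrC.
exists (1%:M - d *m S *m K); split.
- rewrite /Hunitary qadjmxD qadjmxN qadjmx1 !qadjmxM qadjmxK Hm_herm.
  set P := Hm *m d.
  have E1 : P *m (qadjmx S *m qadjmx d) *m Hm = P *m qadjmx S *m K.
    by rewrite !mulmxA.
  have E2 : Hm *m (d *m S *m K) = P *m S *m K by rewrite !mulmxA.
  have E3 : P *m qadjmx S *m K *m (d *m S *m K) =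
            P *m (qadjmx S *m '[d, d] *m S) *m K.
    by rewrite !mulmxA.
  rewrite mulmxBl mul1mx E1 mulmxBr mulmx1 mulmxBl E2 E3 SddS mulmxDr mulmxDl.
  by rewrite opprB addrK subrK.
- by rewrite mulmxBl mul1mx -(mulmxA _ K) -/T -mulmxA ST mulmx1.
- by move=> k w dw; rewrite mulmxBl mul1mx -(mulmxA _ K) dw mulmx0 subr0.
Qed.

Definition isometric_over m (W : 'M[H]_(n, m)) (x y : 'cV[H]_n) :=
  exists V, [/\ Hunitary Hm V, V *m W = W & V *m x = y].

Lemma isometric_over_refl m (W : 'M[H]_(n, m)) x : isometric_over W x x.
Proof. by exists 1%:M; split; rewrite ?mul1mx //; apply: Hunitary1. Qed.

Lemma isometric_over_trans m (W : 'M[H]_(n, m)) x y z :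
  isometric_over W x y -> isometric_over W y z -> isometric_over W x z.
Proof.
move=> [U [HU UW Ux]] [V [HV VW Vy]].
exists (V *m U); split; first exact: HunitaryM.
  by rewrite -mulmxA UW VW.
by rewrite -mulmxA Ux Vy.
Qed.

Lemma isometric_over_nondegenerate m (W : 'M[H]_(n, m)) x y :
  '[W, x] = '[W, y] -> '[x, x] = '[y, y] -> '[x - y, x] != 0 ->
  isometric_over W x y.
Proof.
move=> Wxy xy xyx0.
have ddT : '[x - y, x - y] = '[x - y, x] + qadjmx '[x - y, x].
  by rewrite qadjmx_form !formBl !formBr xy opprB addrC.
have [s [Hs sx sW]] := transvection xyx0 ddT.
exists s; split => //; last by rewrite sx opprB addrC subrK.
by apply: sW; rewrite -qadjmx_form formBr Wxy subrr qadjmx0.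
Qed.

Variable Hinv : 'M[H]_n.
Hypotheses (HinvHm : Hinv *m Hm = 1%:M) (HmHinv : Hm *m Hinv = 1%:M).

Lemma Hunitary_inj U k (A B : 'M[H]_(n, k)) :
  Hunitary Hm U -> U *m A = U *m B -> A = B.
Proof.
move=> HU UAB; have UK : Hinv *m qadjmx U *m Hm *m U = 1%:M.
  by rewrite -!mulmxA (mulmxA (qadjmx U)) HU HinvHm.
by rewrite -[A]mul1mx -[B]mul1mx -UK -!mulmxA UAB.
Qed.

Lemma notin_colspan_orthogonal m (W : 'M[H]_(n, m)) x :
  ~ in_colspan W x -> exists u : 'cV_n, '[u, W] = 0 /\ '[u, x] != 0.
Proof.
move=> Wx; have [r [rW rx]] := notin_colspan_separated unitH Wx.
have ru : qadjmx (Hinv *m qadjmx r) *m Hm = r.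
  rewrite qadjmxM qadjmxK -mulmxA -{1}Hm_herm -qadjmxM HmHinv.
  by rewrite qadjmx1 mulmx1.
by exists (Hinv *m qadjmx r); rewrite ru.
Qed.

Lemma notin_colspan_common_orthogonal m (W : 'M[H]_(n, m)) x y :
  ~ in_colspan W x -> ~ in_colspan W y ->
  exists u : 'cV_n, [/\ '[u, W] = 0, '[u, x] != 0 & '[u, y] != 0].
Proof.
move=> /notin_colspan_orthogonal[u [uW ux]] /notin_colspan_orthogonal[v [vW vy]].
have [uy | uy0] := eqVneq '[u, y] 0; last by exists u.
have [vx | vx0] := eqVneq '[v, x] 0; last by exists v.
by exists (u + v); rewrite qadjmxD !mulmxDl uW vW uy vx add0r addr0 add0r.
Qed.

Lemma isometric_over_notin_colspan m (W : 'M[H]_(n, m)) x y :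
  '[W, x] = '[W, y] -> '[x, x] = '[y, y] ->
  ~ in_colspan W x -> ~ in_colspan W y -> isometric_over W x y.
Proof.
move=> Wxy xy Wx Wy.
have [xyx | ] := eqVneq '[x - y, x] 0; last exact: isometric_over_nondegenerate.
have [u [uW ux uy]] := notin_colspan_common_orthogonal Wx Wy.
have [a a0 norm_a] := exists_norm_preserving_shift ux (qadjmx_form u u).
set z := x + u *m a.
have Wu : '[W, u] = 0 by rewrite -qadjmx_form uW qadjmx0.
have Wz : '[W, z] = '[W, x] by rewrite mulmxDr formMr Wu mul0mx addr0.
have zz : '[z, z] = '[x, x].
  rewrite qadjmxD !mulmxDl !mulmxDr formMl !formMr formMl -(qadjmx_form u x).
  by rewrite -addrA (addrA (_ *m a)) norm_a addr0.
apply: (@isometric_over_trans _ _ _ z); apply: isometric_over_nondegenerate.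
- by rewrite Wz.
- by rewrite zz.
- have -> : x - z = - (u *m a) by rewrite /z opprD addrA subrr add0r.
  rewrite qadjmxN !mulNmx oppr_eq0 formMl.
  by rewrite (mul11mx_neq0 unitH) ?qadjmx_eq0.
- by rewrite Wz.
- by rewrite zz.
- rewrite formBl zz mulmxDr formMr opprD addrA -formBl xyx add0r oppr_eq0.
  by rewrite (mulmx11_neq0 unitH) // -qadjmx_form qadjmx_eq0.
Qed.

Lemma isometric_over_coords m (W : 'M[H]_(n, m)) x y :
  '[W, x] = '[W, y] -> '[x, x] = '[y, y] ->
  (forall c, W *m c = x <-> W *m c = y) -> isometric_over W x y.
Proof.
move=> Wxy xy coords.
have [[c Wcx] | Wx] := classic (in_colspan W x).
  have Wcy : W *m c = y by apply/coords.
  by rewrite -Wcx Wcy; apply: isometric_over_refl.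
have [[c Wcy] | Wy] := classic (in_colspan W y).
  have Wcx : W *m c = x by apply/coords.
  by rewrite -Wcy -Wcx; apply: isometric_over_refl.
exact: isometric_over_notin_colspan.
Qed.

Lemma witt_extension k (P Q : 'M[H]_(n, k)) :
  '[P, P] = '[Q, Q] -> (forall c : 'cV_k, P *m c = 0 <-> Q *m c = 0) ->
  exists2 U : 'M_n, Hunitary Hm U & U *m P = Q.
Proof.
elim: k P Q => [|k IHk] P Q PQ kerPQ.
  by exists 1%:M; [exact: Hunitary1 | rewrite !thinmx0].
move: P Q PQ kerPQ; rewrite -add1n => P Q.
rewrite -[P]hsubmxK -[Q]hsubmxK.
move: (lsubmx P) (rsubmx P) (lsubmx Q) (rsubmx Q) => p P1 q Q1.
rewrite !form_row_mx => /eq_block_mx[pq _ P1p P1Q1] kerPQ.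
have ker1 (c : 'cV_k) : P1 *m c = 0 <-> Q1 *m c = 0.
  by have := kerPQ (col_mx 0 c); rewrite !mul_row_col !mulmx0 !add0r.
have coords (c : 'cV_k) : P1 *m c = p <-> Q1 *m c = q.
  have := kerPQ (col_mx (- 1%:M) c); rewrite !mul_row_col !mulmxN !mulmx1.
  rewrite !(addrC (- _)) => -[PQc QPc].
  split => [Pc | Qc]; apply/eqP; rewrite -subr_eq0; apply/eqP.
    by apply: PQc; rewrite Pc subrr.
  by apply: QPc; rewrite Qc subrr.
have [U1 HU1 U1P1] := IHk P1 Q1 P1Q1 ker1.
have [V [HV VQ1 Vp]] : isometric_over Q1 (U1 *m p) q.
  apply: isometric_over_coords.
  - by rewrite -[in LHS]U1P1 Hunitary_form.
  - by rewrite Hunitary_form.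
  - move=> c; rewrite -(coords c) -{1}U1P1 -mulmxA.
    by split => [/(Hunitary_inj HU1) | ->].
exists (V *m U1); first exact: HunitaryM.
by rewrite mul_mx_row -!mulmxA U1P1 VQ1 Vp.
Qed.

End HermitianForm.

Section HAdjoint.
Variables (R : realType) (n : nat) (Hm : 'M[quat R]_n).

Lemma qinvmx_spec :
  qinvertible Hm -> Hm *m qinvmx Hm = 1%:M /\ qinvmx Hm *m Hm = 1%:M.
Proof. exact: epsilon_spec. Qed.

Lemma Hadj_mulmx (A B : 'M[quat R]_n) :
  Hadj Hm A *m B = qinvmx Hm *m (qadjmx A *m Hm *m B).
Proof. by rewrite /Hadj !mulmxA. Qed.

Lemma form_Hadj (A B : 'M[quat R]_n) : Hm *m qinvmx Hm = 1%:M ->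
  qadjmx A *m Hm *m B = Hm *m (Hadj Hm A *m B).
Proof. by move=> HmHinv; rewrite Hadj_mulmx mulmxA HmHinv mul1mx. Qed.

End HAdjoint.

Unset Implicit Arguments.
Theorem theorem6p1 (R : realType) (n : nat) (Hm X : 'M[quat R]_n) :
  qhermitian Hm -> qinvertible Hm ->
  (exists U A : 'M[quat R]_n, Hpolar_decomposition Hm X U A) <->
  (exists A : 'M[quat R]_n,
     [/\ Hselfadjoint Hm A, A *m A = Hadj Hm X *m X &
         forall x : 'cV[quat R]_n, qker X x <-> qker A x]).
Proof.
move=> Hm_herm /qinvmx_spec[HmHinv HinvHm].
split=> [[U [A [HU HA ->]]] | [A [HA AAX kerXA]]].
  exists A; split => //.
    by rewrite Hadj_mulmx Hunitary_form // -Hadj_mulmx HA.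
  move=> x; rewrite /qker -mulmxA; split => [UAx | ->]; last by rewrite mulmx0.
  by apply: (Hunitary_inj HinvHm HU); rewrite UAx mulmx0.
have gram : qadjmx A *m Hm *m A = qadjmx X *m Hm *m X.
  by rewrite !form_Hadj // HA AAX.
have kerAX (c : 'cV_n) : A *m c = 0 <-> X *m c = 0.
  by apply: iff_sym; apply: kerXA.
have [U HU UA] := witt_extension Hm_herm HinvHm HmHinv gram kerAX.
by exists U, A.
Qed.
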